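(* For every finite hypergraph $H$, $\mathrm{ch}_{um}(H)\le s(H)$.
   Context: For a hypergraph $H$ with hyperedge set $\mathcal E(H)$ (nonempty hyperedges), $s(H)$ is the minimum positive integer $s$ with $|\mathcal E(H)|\le s(s-1)/2$. A coloring $C\colon V\to\mathbb Z_{>0}$ is unique-maximum if in every hyperedge the maximum color is attained by exactly one vertex. The um-choice number $\mathrm{ch}_{um}(H)$ is the minimum $k$ such that for every family $\{L_v\}_{v\in V}$ of sets of positive integers with $|L_v|\ge k$ there is a unique-maximum coloring $C$ with $C(v)\in L_v$ for all $v$. *)

From Stdlib Require Import Lia.
From mathcomp Require Import all_boot.
Set Implicit Arguments. Unset Strict Implicit. Unset Printing Implicit Defensive.

(* A finite hypergraph: vertex set the finType V, hyperedge set E, a set of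
   nonempty subsets of V. *)
Definition hypergraph (V : finType) (E : {set {set V}}) : Prop :=
  forall e, e \in E -> e != set0.

Definition s_pred (m : nat) : pred nat :=
  fun s => (0 < s) && (m <= (s * (s - 1)) %/ 2).

Lemma s_pred_ex (m : nat) : exists s, s_pred m s.
Proof.
exists m.+2; rewrite /s_pred /=; rewrite leq_divRL //.
rewrite subSS subn0 -[m.+2]addn2 -[m.+1]addn1.
apply/leP; rewrite -!plusE -!multE; lia.
Qed.

Definition s_of (V : finType) (E : {set {set V}}) : nat :=
  ex_minn (s_pred_ex #|E|).

Definition unique_max (V : finType) (E : {set {set V}}) (C : V -> nat) : Prop :=
  forall e, e \in E ->
    exists2 v, v \in e & forall w, w \in e -> w != v -> C w < C v.

(* Lists: finite sets of positive integers (given as sequences) with at least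
   k distinct elements. *)
Definition um_choosable (V : finType) (E : {set {set V}}) (k : nat) : Prop :=
  forall L : V -> seq nat,
    (forall v, all (fun c => 0 < c) (L v)) ->
    (forall v, k <= size (undup (L v))) ->
    exists C : V -> nat,
      (forall v, C v \in L v) /\ (forall v, 0 < C v) /\ unique_max E C.

(* ch_um(H) <= m : the minimum k with um_choosable H k is at most m,
   i.e. some k <= m is admissible. *)
Definition ch_um_le (V : finType) (E : {set {set V}}) (m : nat) : Prop :=
  exists2 k, k <= m & um_choosable E k.

(* Induction on the vertices.  Let v carry the largest colour c occurring in any list.
   If v lies in at least k of the at most k(k-1)/2 edges, colour v with c (it is then the
   unique maximum of all these edges), delete v and those edges, and remove c from the
   other lists: at most (k-1)(k-2)/2 edges remain and the lists keep k-1 colours.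
   Otherwise colour H - v first and give v a colour of its list avoiding the fewer than k
   maxima of the edges through v; then every edge through v has a unique maximum,
   either v itself or the unique maximum of e - v. *)

From mathcomp Require Import all_boot zify.
Set Implicit Arguments. Unset Strict Implicit. Unset Printing Implicit Defensive.

Lemma bigmax_seq_mem (s : seq nat) : s != [::] -> \max_(x <- s) x \in s.
Proof.
elim: s => // x [|y s] IH _; rewrite big_cons.
  by rewrite big_nil maxn0 mem_head.
by rewrite /maxn inE; case: ltnP => _; rewrite ?eqxx // IH ?orbT.
Qed.

Lemma exists_mem_notin (T : eqType) (s r : seq T) :
  size r < size (undup s) -> exists2 x, x \in s & x \notin r.
Proof.
move=> lt_r_s; apply/hasP; rewrite has_predC; apply: contraTN lt_r_s => /allP s_r.
by rewrite -leqNgt uniq_leq_size ?undup_uniq // => x; rewrite mem_undup => /s_r.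
Qed.

Lemma size_undup_filter_neq (T : eqType) (c : T) (s : seq T) :
  size (undup s) - 1 <= size (undup [seq y <- s | y != c]).
Proof.
rewrite subn1 -filter_undup -rem_filter ?undup_uniq //.
have [/size_rem -> // | /rem_id ->] := boolP (c \in undup s).
exact: leq_pred.
Qed.

Lemma edge_budget_drop (m d k : nat) :
  0 < k -> k <= d -> d <= m -> 2 * m <= k * (k - 1) ->
  0 < k - 1 /\ 2 * (m - d) <= (k - 1) * (k - 1 - 1).
Proof. by move=> *; split; nia. Qed.

Section UniqueMaxColoring.
Variable V : finType.
Implicit Types (U e : {set V}) (F : {set {set V}}) (C : V -> nat) (L : V -> seq nat).

Definition umax_in e C :=
  exists2 v, v \in e & forall w, w \in e -> w != v -> C w < C v.

Definition recolor C v (x : nat) u := if u == v then x else C u.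

Lemma umax_in_eq e C C' : {in e, C =1 C'} -> umax_in e C -> umax_in e C'.
Proof.
move=> eqCC' [v ve maxv]; exists v => // w we wv.
by rewrite -!eqCC' //; apply: maxv.
Qed.

Lemma umax_in_recolor_notin e C v x :
  v \notin e -> umax_in e C -> umax_in e (recolor C v x).
Proof.
move=> ve; apply: umax_in_eq => w we; rewrite /recolor.
by case: eqP => // wv; rewrite -wv we in ve.
Qed.

Lemma umax_in_recolor_top e C v x :
  v \in e -> (forall w, w \in e -> w != v -> C w < x) -> umax_in e (recolor C v x).
Proof. by move=> ve ltCx; exists v => // w we wv; rewrite /recolor eqxx (negbTE wv) ltCx. Qed.

Lemma umax_in_setD1_eq0 e C v : v \in e -> e :\ v = set0 -> umax_in e C.
Proof.
move=> ve ev0; exists v => // w we wv.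
have : w \in e :\ v by apply/setD1P.
by rewrite ev0 inE.
Qed.

Lemma umax_in_recolor_setD1 e C v x :
  v \in e -> umax_in (e :\ v) C -> x != \max_(w in e :\ v) C w ->
  umax_in e (recolor C v x).
Proof.
move=> ve [w0 /setD1P [w0v w0e] maxw0] x_neq_max.
have max_w0 : \max_(w in e :\ v) C w = C w0.
  apply/eqP; rewrite eqn_leq leq_bigmax_cond ?andbT; last exact/setD1P.
  apply/bigmax_leqP => w ew; have [-> // | ww0] := eqVneq w w0.
  exact/ltnW/maxw0.
rewrite max_w0 in x_neq_max.
have [ltx | ltCx | eqx] := ltngtP x (C w0); last by rewrite eqx eqxx in x_neq_max.
- exists w0 => // w we ww0; rewrite /recolor (negbTE w0v).
  by case: eqP => // /eqP wv; apply/maxw0/ww0/setD1P.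
- apply: umax_in_recolor_top => // w we wv; apply: leq_ltn_trans ltCx.
  by have [-> // | ww0] := eqVneq w w0; apply/ltnW/maxw0/ww0/setD1P.
Qed.

Definition colorable_from F U L :=
  exists2 C, {in U, forall u, C u \in L u} & unique_max F C.

Definition edges_at F v := [set e in F | v \in e].

Definition delete_vertex F v := [set e :\ v | e in F] :\ set0.

Lemma delete_vertex_subset F U v :
  {in F, forall e, e \subset U} -> {in delete_vertex F v, forall e, e \subset U :\ v}.
Proof.
move=> FU _ /setD1P [_ /imsetP [e eF ->]].
exact/setSD/FU.
Qed.

Lemma card_delete_vertex F v : #|delete_vertex F v| <= #|F|.
Proof. exact: leq_trans (subset_leq_card (subsetDl _ _)) (leq_imset_card _ _). Qed.

Lemma delete_edges_at_subset F U v :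
  {in F, forall e, e \subset U} -> {in F :\: edges_at F v, forall e, e \subset U :\ v}.
Proof.
move=> FU e; rewrite !inE => /andP [ve eF].
apply/subsetP => w we; rewrite in_setD1 (subsetP (FU e eF)) // andbT.
by apply: contraNneq ve => <-; rewrite eF.
Qed.

Lemma edges_at_subset F v : edges_at F v \subset F.
Proof. by rewrite /edges_at setIdE subsetIl. Qed.

Lemma card_delete_edges_at F v : #|F :\: edges_at F v| = #|F| - #|edges_at F v|.
Proof. by rewrite cardsD (setIidPr (edges_at_subset F v)). Qed.

Lemma exists_top_color U L :
  U != set0 -> {in U, forall u, L u != [::]} ->
  exists v c, [/\ v \in U, c \in L v & forall u y, u \in U -> y \in L u -> y <= c].
Proof.
case/set0Pn => u0 u0U L_ne0; pose top u := \max_(y <- L u) y.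
have [v vU top_v] := arg_maxnP top u0U.
exists v, (top v); split=> //; first exact/bigmax_seq_mem/L_ne0.
by move=> u y uU yL; apply: leq_trans (top_v u uU); apply: leq_bigmax_seq.
Qed.

Lemma recolor_in_lists U L C v x :
  x \in L v -> {in U :\ v, forall u, C u \in L u} ->
  {in U, forall u, recolor C v x u \in L u}.
Proof.
move=> xL CL u uU; rewrite /recolor.
by case: eqP => [-> // | /eqP uv]; apply/CL/setD1P.
Qed.

Lemma colorable_from_low_degree F U L v :
  set0 \notin F -> #|edges_at F v| < size (undup (L v)) ->
  colorable_from (delete_vertex F v) (U :\ v) L -> colorable_from F U L.
Proof.
move=> F_ne0 deg_lt [C CL umaxC].
pose maxima := [seq \max_(w in e :\ v) C w | e <- enum (edges_at F v)].
have [x xL x_fresh] : exists2 x, x \in L v & x \notin maxima.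
  by apply: exists_mem_notin; rewrite size_map -cardE.
exists (recolor C v x); first exact: recolor_in_lists.
move=> e eF; have [ve | ve] := boolP (v \in e); last first.
  apply: umax_in_recolor_notin => //; apply: umaxC.
  have ev : e :\ v = e by apply/setDidPl; rewrite disjoint_sym disjoints1.
  rewrite in_setD1 -{2}ev (imset_f (fun e => e :\ v)) // andbT.
  by apply: contraTneq eF => ->.
have [ev0 | ev_ne0] := eqVneq (e :\ v) set0; first exact: umax_in_setD1_eq0 ev0.
apply: umax_in_recolor_setD1 => //.
  by apply: umaxC; rewrite in_setD1 ev_ne0 (imset_f (fun e => e :\ v)).
by apply: contraNneq x_fresh => ->; rewrite map_f // mem_enum inE eF ve.
Qed.

Lemma colorable_from_top_color F U L v c :
  {in F, forall e, e \subset U} -> c \in L v ->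
  (forall u y, u \in U -> y \in L u -> y <= c) ->
  colorable_from (F :\: edges_at F v) (U :\ v) (fun u => [seq y <- L u | y != c]) ->
  colorable_from F U L.
Proof.
move=> FU cL c_top [C CL umaxC]; exists (recolor C v c).
  by apply: recolor_in_lists => // u /CL; rewrite mem_filter => /andP [].
move=> e eF; have [ve | ve] := boolP (v \in e); last first.
  by apply: umax_in_recolor_notin => //; apply: umaxC; rewrite !inE eF (negbTE ve).
apply: umax_in_recolor_top => // w we wv.
have wU : w \in U := subsetP (FU e eF) w we.
have /CL : w \in U :\ v by apply/setD1P.
by rewrite mem_filter ltn_neqAle => /andP [-> /(c_top w _ wU)].
Qed.

Lemma colorable_from_edge_budget k F U L :
  set0 \notin F -> {in F, forall e, e \subset U} -> 0 < k -> 2 * #|F| <= k * (k - 1) ->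
  {in U, forall u, k <= size (undup (L u))} -> colorable_from F U L.
Proof.
have [n] := ubnP #|U|; elim: n => // n IH in k F U L *.
move=> ltUn F_ne0 FU k_gt0 budget Lk.
have [U0 | U_ne0] := eqVneq U set0.
  exists (fun=> 0) => [u | e eF]; first by rewrite U0 inE.
  by have := FU e eF; rewrite U0 subset0 => /eqP e0; rewrite -e0 eF in F_ne0.
have L_ne0 : {in U, forall u, L u != [::]}.
  by move=> u /Lk; apply: contraTneq => ->; rewrite -ltnNge.
have [v [c [vU cL c_top]]] := exists_top_color U_ne0 L_ne0.
have ltUvn : #|U :\ v| < n by move: ltUn; rewrite (cardsD1 v U) vU.
have [deg_lt | deg_ge] := ltnP #|edges_at F v| k.
  apply: colorable_from_low_degree F_ne0 (leq_trans deg_lt (Lk v vU)) _.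
  apply: (IH k) => //; first by rewrite setD11.
  - exact: delete_vertex_subset.
  - exact: leq_trans (leq_mul (leqnn 2) (card_delete_vertex F v)) budget.
  - by move=> u /setD1P [_ /Lk].
have [|k1_gt0 budget'] := edge_budget_drop k_gt0 deg_ge _ budget.
  exact/subset_leq_card/edges_at_subset.
apply/(colorable_from_top_color FU cL c_top).
apply: (IH (k - 1)) => //.
- by rewrite in_setD negb_and F_ne0 orbT.
- exact: delete_edges_at_subset FU.
- by rewrite card_delete_edges_at.
- move=> u /setD1P [_ /Lk Lku].
  exact: leq_trans (leq_sub2r 1 Lku) (size_undup_filter_neq c (L u)).
Qed.

End UniqueMaxColoring.

Theorem corollary5p5 (V : finType) (E : {set {set V}}) :
  hypergraph E -> ch_um_le E (s_of E).
Proof.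
move=> hE; rewrite /ch_um_le /s_of; case: ex_minnP => s /andP [s_gt0 s_budget] _.
exists s => // L L_pos L_size.
have E_ne0 : set0 \notin E by apply/negP => /hE; rewrite eqxx.
have budget : 2 * #|E| <= s * (s - 1) by rewrite mulnC -leq_divRL.
have [C CL umaxC] := colorable_from_edge_budget E_ne0 (fun e _ => subsetT e) s_gt0 budget
  (in1W L_size : {in setT, _}).
have CLv v : C v \in L v := CL v (in_setT v).
by exists C; split=> //; split=> // v; apply: (allP (L_pos v)).
Qed.
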